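(* Let $R$ be a commutative ring. The following are equivalent: (1) every finitely presented $R$-module is $w$-FP-projective; (2) every FP-projective $R$-module is $w$-FP-projective; (3) $R$ is a $DW$-ring.
   Context: All rings are commutative with identity. A $GV$-ideal of $R$ is a finitely generated ideal $J$ such that the natural map $R\to\mathrm{Hom}_R(J,R)$ is an isomorphism; $GV(R)$ is the set of $GV$-ideals. For an $R$-module $M$, $\mathrm{tor}_{GV}(M)=\{x\in M: Jx=0\text{ for some }J\in GV(R)\}$; $M$ is $GV$-torsion if $\mathrm{tor}_{GV}(M)=M$ and $GV$-torsion-free if $\mathrm{tor}_{GV}(M)=0$. A $GV$-torsion-free module $M$ is a $w$-module if $\mathrm{Ext}^1_R(R/J,M)=0$ for all $J\in GV(R)$; an ideal of $R$ is a $w$-ideal if it is a $w$-module. $R$ is a $DW$-ring if every ideal of $R$ is a $w$-ideal. An $R$-module $A$ is absolutely $w$-pure if $\mathrm{Ext}^1_R(N,A)$ is $GV$-torsion for every finitely presented $R$-module $N$; $A$ is absolutely pure (FP-injective) if $\mathrm{Ext}^1_R(N,A)=0$ for every finitely presented $N$. An $R$-module $M$ is $w$-FP-projective if $\mathrm{Ext}^1_R(M,A)=0$ for every absolutely $w$-pure $R$-module $A$, and FP-projective if $\mathrm{Ext}^1_R(M,A)=0$ for every absolutely pure $R$-module $A$. *)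

From HB Require Import structures.
From mathcomp Require Import all_boot all_algebra.
Set Implicit Arguments. Unset Strict Implicit. Unset Printing Implicit Defensive.
Import GRing.Theory.
Local Open Scope ring_scope.

Section GVTheory.
Variable R : comPzRingType.

Definition lin (M N : lmodType R) (f : M -> N) : Prop :=
  forall (a : R) (x y : M), f (a *: x + y) = a *: f x + f y.

Definition ses (A E N : lmodType R) (i : A -> E) (p : E -> N) : Prop :=
  [/\ lin i, lin p, injective i, (forall y, exists x, p x = y) &
      (forall x, p x = 0 <-> exists a, i a = x)].

(* Ext^1_R(N, A) = 0 (Yoneda): every extension of N by A splits *)
Definition Ext1_zero (N A : lmodType R) : Prop :=
  forall (E : lmodType R) (i : A -> E) (p : E -> N), ses i p ->
    exists s : N -> E, lin s /\ forall y, p (s y) = y.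

Definition ideal_gen (xs : seq R) : R -> Prop :=
  fun r => exists cs : seq R, size cs = size xs /\
             r = \sum_(i < size xs) cs`_i * xs`_i.

Definition is_ideal (I : R -> Prop) : Prop :=
  [/\ I 0, (forall x y, I x -> I y -> I (x + y)) & forall a x, I x -> I (a * x)].

(* J = (xs) is a GV-ideal: R -> Hom_R(J,R), r |-> (x |-> r x) is bijective.
   Elements of Hom_R(J,R) are represented by functions R -> R that are
   R-linear on J, compared on J. *)
Definition GV (xs : seq R) : Prop :=
  let J := ideal_gen xs in
  (forall r : R, (forall x, J x -> r * x = 0) -> r = 0) /\
  (forall f : R -> R,
     (forall a x y, J x -> J y -> f (a * x + y) = a * f x + f y) ->
     exists r : R, forall x, J x -> f x = r * x).

Definition gv_tor_elt (M : lmodType R) (x : M) : Prop :=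
  exists xs, GV xs /\ forall j, ideal_gen xs j -> j *: x = 0.

Definition GV_torsion_free (M : lmodType R) : Prop :=
  forall x : M, gv_tor_elt x -> x = 0.

(* Q is (isomorphic to) R/J : cyclic with annihilator of a generator = J *)
Definition quotient_by (J : R -> Prop) (Q : lmodType R) : Prop :=
  exists q0 : Q, (forall y : Q, exists r, y = r *: q0) /\
                 (forall r, r *: q0 = 0 <-> J r).

Definition w_module (M : lmodType R) : Prop :=
  GV_torsion_free M /\
  forall xs, GV xs -> forall Q : lmodType R, quotient_by (ideal_gen xs) Q ->
    Ext1_zero Q M.

(* an ideal I is a w-ideal: I (i.e. any R-module isomorphic to I via an
   injective linear map onto I) is a w-module *)
Definition w_ideal (I : R -> Prop) : Prop :=
  forall (N : lmodType R) (e : N -> R^o), lin e -> injective e ->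
    (forall r : R, I r <-> exists x, e x = r) -> w_module N.

Definition DW_ring : Prop := forall I, is_ideal I -> w_ideal I.

Definition fin_presented (N : lmodType R) : Prop :=
  exists n (g : 'I_n -> N),
    (forall y, exists c : 'I_n -> R, y = \sum_(i < n) c i *: g i) /\
    exists k (rel : 'I_k -> 'I_n -> R),
      (forall l, \sum_(i < n) rel l i *: g i = 0) /\
      forall c : 'I_n -> R, \sum_(i < n) c i *: g i = 0 ->
        exists d : 'I_k -> R, forall i, c i = \sum_(l < k) d l * rel l i.

(* Ext^1_R(N, A) is GV-torsion: each class [0->A-i->E-p->N->0] is killed by
   some GV-ideal J; j.[xi] (pushout along j.id_A) is zero iff j.id_A extends
   along i to E. *)
Definition Ext1_GV_torsion (N A : lmodType R) : Prop :=
  forall (E : lmodType R) (i : A -> E) (p : E -> N), ses i p ->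
    exists xs, GV xs /\ forall j, ideal_gen xs j ->
      exists h : E -> A, lin h /\ forall a, h (i a) = j *: a.

Definition abs_w_pure (A : lmodType R) : Prop :=
  forall N : lmodType R, fin_presented N -> Ext1_GV_torsion N A.

Definition abs_pure (A : lmodType R) : Prop :=
  forall N : lmodType R, fin_presented N -> Ext1_zero N A.

Definition w_FP_projective (M : lmodType R) : Prop :=
  forall A : lmodType R, abs_w_pure A -> Ext1_zero M A.

Definition FP_projective (M : lmodType R) : Prop :=
  forall A : lmodType R, abs_pure A -> Ext1_zero M A.

End GVTheory.

From mathcomp Require Import all_boot all_algebra.
From HB Require Import structures.
From mathcomp Require Import boolp.
Set Implicit Arguments. Unset Strict Implicit. Unset Printing Implicit Defensive.
Import GRing.Theory.
Local Open Scope ring_scope.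

(* All three conditions say that R is its only GV-ideal.  If so, GV-torsion
   is trivial, every module is a w-module, and absolutely w-pure modules are
   absolutely pure, so (1), (2) and (3) hold.  Conversely let J be a GV-ideal,
   so that Ann(J) = 0.  If R is a DW-ring then J is a w-module, hence
   0 -> J -> R -> R/J -> 0 splits; the image of 1 under the splitting is
   killed by J, hence is 0, and J = R.  If R/J is w-FP-projective, then
   J/J^2, being killed by J, is absolutely w-pure, so
   0 -> J/J^2 -> R/J^2 -> R/J -> 0 splits, which forces J = J^2.  By
   Nakayama some w = 1 mod J kills J; then w = 0 and again J = R. *)

Section Linear.
Variables (R : comPzRingType) (M N : lmodType R) (f : M -> N).
Hypothesis f_lin : lin f.

Lemma linD x y : f (x + y) = f x + f y.
Proof. by have := f_lin 1 x y; rewrite !scale1r. Qed.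

Lemma lin0 : f 0 = 0.
Proof. by apply: (@addrI _ (f 0)); rewrite -linD !addr0. Qed.

Lemma linZ a x : f (a *: x) = a *: f x.
Proof. by rewrite -[a *: x]addr0 f_lin lin0 addr0. Qed.

Lemma linB x y : f (x - y) = f x - f y.
Proof. by rewrite linD -scaleN1r linZ scaleN1r. Qed.

End Linear.

Lemma lin_cst0 (R : comPzRingType) (M N : lmodType R) : lin (fun _ : M => 0 : N).
Proof. by move=> a x y; rewrite scaler0 addr0. Qed.

Lemma ses_split (R : comPzRingType) (A E N : lmodType R)
    (i : A -> E) (p : E -> N) (h : E -> A) :
  ses i p -> lin h -> (forall a, h (i a) = a) ->
  exists s : N -> E, lin s /\ forall y, p (s y) = y.
Proof.
move=> [i_lin p_lin i_inj p_surj ker_p] h_lin hi.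
have p_i a : p (i a) = 0 by apply/ker_p; exists a.
pose s y := let x := sval (cid (p_surj y)) in x - i (h x).
have ps y : p (s y) = y by rewrite /s linB // p_i subr0; case: cid.
have hs y : h (s y) = 0 by rewrite /s linB // hi subrr.
have s_unique x x' : p x = p x' -> h x = h x' -> x = x'.
  move=> pxx' hxx'; apply/eqP; rewrite -subr_eq0; apply/eqP.
  have /ker_p [b ib] : p (x - x') = 0 by rewrite linB // pxx' subrr.
  have : h (x - x') = 0 by rewrite linB // hxx' subrr.
  by rewrite -ib hi => ->; rewrite lin0.
exists s; split => // a y y'; apply: s_unique.
  by rewrite ps p_lin !ps.
by rewrite hs h_lin !hs scaler0 addr0.
Qed.

Section Submodules.
Variables (R : comPzRingType) (M : lmodType R).

Record submod := Submod {
  submod_mem :> M -> Prop;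
  submod0 : submod_mem 0;
  submodB : forall x y, submod_mem x -> submod_mem y -> submod_mem (x - y);
  submodZ : forall a x, submod_mem x -> submod_mem (a *: x) }.

Lemma submodN (S : submod) x : S x -> S (- x).
Proof. by move=> Sx; rewrite -sub0r; apply: submodB => //; apply: submod0. Qed.

Lemma submodD (S : submod) x y : S x -> S y -> S (x + y).
Proof. by move=> Sx Sy; rewrite -[y]opprK; apply: submodB => //; apply: submodN. Qed.

Section SubModule.
Variable S : submod.

Definition sub_mod := {x : M | S x}.
HB.instance Definition _ := gen_eqMixin sub_mod.
HB.instance Definition _ := gen_choiceMixin sub_mod.

Lemma sval_inj : injective (@sval M S : sub_mod -> M).
Proof. by case=> x Sx [y Sy] /= xy; apply: eq_exist. Qed.

Definition sub_add (a b : sub_mod) : sub_mod := exist _ _ (submodD (svalP a) (svalP b)).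
Definition sub_opp (a : sub_mod) : sub_mod := exist _ _ (submodN (svalP a)).
Definition sub_zero : sub_mod := exist _ _ (submod0 S).
Definition sub_scale r (a : sub_mod) : sub_mod := exist _ _ (submodZ r (svalP a)).

Lemma sub_addA : associative sub_add.
Proof. by move=> a b c; apply: sval_inj; rewrite /= addrA. Qed.
Lemma sub_addC : commutative sub_add.
Proof. by move=> a b; apply: sval_inj; rewrite /= addrC. Qed.
Lemma sub_add0 : left_id sub_zero sub_add.
Proof. by move=> a; apply: sval_inj; rewrite /= add0r. Qed.
Lemma sub_addN : left_inverse sub_zero sub_opp sub_add.
Proof. by move=> a; apply: sval_inj; rewrite /= addNr. Qed.
HB.instance Definition _ :=
  GRing.isZmodule.Build sub_mod sub_addA sub_addC sub_add0 sub_addN.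

Lemma sub_scaleA a b v : sub_scale a (sub_scale b v) = sub_scale (a * b) v.
Proof. by apply: sval_inj; rewrite /= scalerA. Qed.
Lemma sub_scale1 : left_id 1 sub_scale.
Proof. by move=> v; apply: sval_inj; rewrite /= scale1r. Qed.
Lemma sub_scaleDr : right_distributive sub_scale +%R.
Proof. by move=> a u v; apply: sval_inj; rewrite /= scalerDr. Qed.
Lemma sub_scaleDl v : {morph sub_scale^~ v : a b / a + b}.
Proof. by move=> a b; apply: sval_inj; rewrite /= scalerDl. Qed.
HB.instance Definition _ := GRing.Zmodule_isLmodule.Build R sub_mod
  sub_scaleA sub_scale1 sub_scaleDr sub_scaleDl.

Lemma sval_lin : lin (@sval M S : sub_mod -> M).
Proof. by []. Qed.

End SubModule.

Section QuotientModule.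
Variable S : submod.

Definition quot_mod := {P : M -> Prop | exists x, P = fun y => S (y - x)}.
HB.instance Definition _ := gen_eqMixin quot_mod.
HB.instance Definition _ := gen_choiceMixin quot_mod.

Definition quot_pi (x : M) : quot_mod :=
  exist _ (fun y => S (y - x)) (ex_intro _ x erefl).

Lemma quot_pi_surj (q : quot_mod) : exists x, q = quot_pi x.
Proof. by case: q => P [x Px]; exists x; apply: eq_exist. Qed.

Definition quot_repr (q : quot_mod) : M := sval (cid (quot_pi_surj q)).

Lemma quot_reprK q : quot_pi (quot_repr q) = q.
Proof. by rewrite /quot_repr; case: cid => x /= ->. Qed.

Lemma quot_piP x y : quot_pi x = quot_pi y <-> S (x - y).
Proof.
split.
  move=> /(congr1 sval) /= /(congr1 (fun P => P x)).
  by rewrite subrr => <-; apply: submod0.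
move=> Sxy; apply: eq_exist; apply: funext => z; apply: propext; split => Sz.
  by have := submodD Sz Sxy; rewrite addrA subrK.
by have := submodB Sz Sxy; rewrite opprB addrA subrK.
Qed.

Lemma quot_reprP x : S (quot_repr (quot_pi x) - x).
Proof. by apply/quot_piP; rewrite quot_reprK. Qed.

Definition quot_add (p q : quot_mod) := quot_pi (quot_repr p + quot_repr q).
Definition quot_opp (q : quot_mod) := quot_pi (- quot_repr q).
Definition quot_zero := quot_pi 0.
Definition quot_scale (a : R) (q : quot_mod) := quot_pi (a *: quot_repr q).

Lemma quot_addE x y : quot_add (quot_pi x) (quot_pi y) = quot_pi (x + y).
Proof.
by apply/quot_piP; have := submodD (quot_reprP x) (quot_reprP y); rewrite opprD addrACA.
Qed.

Lemma quot_oppE x : quot_opp (quot_pi x) = quot_pi (- x).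
Proof.
by apply/quot_piP; have := submodN (quot_reprP x); rewrite opprB opprK addrC.
Qed.

Lemma quot_scaleE a x : quot_scale a (quot_pi x) = quot_pi (a *: x).
Proof. by apply/quot_piP; have := submodZ a (quot_reprP x); rewrite scalerBr. Qed.

Lemma quot_addA : associative quot_add.
Proof.
move=> p q r; case: (quot_pi_surj p) => x ->; case: (quot_pi_surj q) => y ->.
by case: (quot_pi_surj r) => z ->; rewrite !quot_addE addrA.
Qed.
Lemma quot_addC : commutative quot_add.
Proof.
move=> p q; case: (quot_pi_surj p) => x ->; case: (quot_pi_surj q) => y ->.
by rewrite !quot_addE addrC.
Qed.
Lemma quot_add0 : left_id quot_zero quot_add.
Proof. by move=> p; case: (quot_pi_surj p) => x ->; rewrite quot_addE add0r. Qed.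
Lemma quot_addN : left_inverse quot_zero quot_opp quot_add.
Proof.
by move=> p; case: (quot_pi_surj p) => x ->; rewrite quot_oppE quot_addE addNr.
Qed.
HB.instance Definition _ :=
  GRing.isZmodule.Build quot_mod quot_addA quot_addC quot_add0 quot_addN.

Lemma quot_piD x y : quot_pi (x + y) = quot_pi x + quot_pi y.
Proof. exact: (esym (quot_addE x y)). Qed.

Lemma quot_scaleA a b q : quot_scale a (quot_scale b q) = quot_scale (a * b) q.
Proof. by case: (quot_pi_surj q) => x ->; rewrite !quot_scaleE scalerA. Qed.
Lemma quot_scale1 : left_id 1 quot_scale.
Proof. by move=> q; case: (quot_pi_surj q) => x ->; rewrite quot_scaleE scale1r. Qed.
Lemma quot_scaleDr : right_distributive quot_scale +%R.
Proof.
move=> a p q; case: (quot_pi_surj p) => x ->; case: (quot_pi_surj q) => y ->.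
by rewrite -quot_piD !quot_scaleE -quot_piD scalerDr.
Qed.
Lemma quot_scaleDl q : {morph quot_scale^~ q : a b / a + b}.
Proof.
by move=> a b; case: (quot_pi_surj q) => x ->; rewrite !quot_scaleE -quot_piD scalerDl.
Qed.
HB.instance Definition _ := GRing.Zmodule_isLmodule.Build R quot_mod
  quot_scaleA quot_scale1 quot_scaleDr quot_scaleDl.

Lemma quot_pi_lin : lin quot_pi.
Proof. by move=> a x y; rewrite quot_piD /GRing.scale /= quot_scaleE. Qed.

Lemma quot_pi_eq0 x : quot_pi x = 0 <-> S x.
Proof. by rewrite -[0]/(quot_pi 0) quot_piP subr0. Qed.

End QuotientModule.

Definition quot_lift (S T : submod) (q : quot_mod S) : quot_mod T :=
  quot_pi T (quot_repr q).

Lemma quot_liftE (S T : submod) x :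
  (forall y, S y -> T y) -> quot_lift T (quot_pi S x) = quot_pi T x.
Proof. by move=> ST; apply/quot_piP; apply: ST; apply: quot_reprP. Qed.

Lemma quot_lift_lin (S T : submod) :
  (forall y, S y -> T y) -> lin (quot_lift T : quot_mod S -> quot_mod T).
Proof.
move=> ST a p q; case: (quot_pi_surj p) => x ->; case: (quot_pi_surj q) => y ->.
by rewrite -(quot_pi_lin S) !quot_liftE // quot_pi_lin.
Qed.

Section Kernel.
Variables (N : lmodType R) (p : M -> N).
Hypothesis p_lin : lin p.

Definition kermod : submod.
Proof.
refine (@Submod (fun x => p x = 0) _ _ _).
- exact: lin0.
- by move=> x y px py; rewrite linB // px py subrr.
- by move=> a x px; rewrite linZ // px scaler0.
Defined.

Lemma ses_ker : (forall y, exists x, p x = y) ->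
  ses (@sval M kermod : sub_mod kermod -> M) p.
Proof.
move=> p_surj; split => //; first exact: sval_inj.
by move=> x; split => [px | [[y py] /= <-]]; [exists (exist _ x px) | ].
Qed.

End Kernel.

End Submodules.

Section Ideals.
Variable R : comPzRingType.
Implicit Types (I : R -> Prop) (xs : seq R).

Lemma idealB I x y : is_ideal I -> I x -> I y -> I (x - y).
Proof. by case=> _ ID IM Ix Iy; apply: ID => //; rewrite -mulN1r; apply: IM. Qed.

Definition ideal_submod I (HI : is_ideal I) : submod R^o.
Proof.
refine (@Submod _ R^o I _ _ _).
- by case: HI.
- by move=> x y; apply: idealB.
- by case: HI => _ _ IM a x; apply: IM.
Defined.

Section QuotientRing.
Variables (I : R -> Prop) (HI : is_ideal I).
Local Notation RI := (quot_mod (ideal_submod HI)).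
Local Notation piI := (quot_pi (ideal_submod HI)).

Lemma quot_ideal_piZ1 r : r *: piI 1 = piI r.
Proof. by rewrite -linZ //; [rewrite /GRing.scale /= mulr1 | apply: quot_pi_lin]. Qed.

Lemma quot_ideal_quotient_by : quotient_by I RI.
Proof.
exists (piI 1); split.
  by move=> q; case: (quot_pi_surj q) => r ->; exists r; rewrite quot_ideal_piZ1.
by move=> r; rewrite quot_ideal_piZ1 quot_pi_eq0.
Qed.

Lemma lin_quot_ideal_ann (N : lmodType R) (f : RI -> N) x :
  lin f -> I x -> x *: f (piI 1) = 0.
Proof.
move=> f_lin Ix; rewrite -linZ // quot_ideal_piZ1.
by rewrite ((quot_pi_eq0 (ideal_submod HI) x).2 Ix) lin0.
Qed.

End QuotientRing.

End Ideals.

Section LinearCombinations.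
Variables (R : comPzRingType) (M : lmodType R).
Implicit Types (P : R -> Prop) (xs : seq M).

Fixpoint lincomb P xs (v : M) : Prop :=
  match xs with
  | [::] => v = 0
  | x :: ys => exists a w, [/\ P a, lincomb P ys w & v = a *: x + w]
  end.

Lemma lincomb0 P xs : P 0 -> lincomb P xs 0.
Proof.
move=> P0; elim: xs => [//|x ys IH] /=.
by exists 0, 0; split; rewrite ?scale0r ?addr0.
Qed.

Lemma lincombD P xs v w : (forall a b, P a -> P b -> P (a + b)) ->
  lincomb P xs v -> lincomb P xs w -> lincomb P xs (v + w).
Proof.
move=> PD; elim: xs v w => [|x ys IH] v w /=; first by move=> -> ->; rewrite addr0.
move=> [a [v' [Pa Hv ->]]] [b [w' [Pb Hw ->]]].
exists (a + b), (v' + w'); split; [exact: PD | exact: IH |].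
by rewrite scalerDl addrACA.
Qed.

Lemma lincomb_scale P P' xs b v : (forall a, P a -> P' (b * a)) ->
  lincomb P xs v -> lincomb P' xs (b *: v).
Proof.
move=> PP'; elim: xs v => [|x ys IH] v /=; first by move=> ->; rewrite scaler0.
move=> [a [v' [Pa Hv ->]]].
by exists (b * a), (b *: v'); split; [exact: PP' | exact: IH | rewrite scalerDr scalerA].
Qed.

Lemma lincomb_mono P P' xs v :
  (forall a, P a -> P' a) -> lincomb P xs v -> lincomb P' xs v.
Proof.
move=> PP' /(lincomb_scale (b := 1)); rewrite scale1r; apply=> a.
by rewrite mul1r; apply: PP'.
Qed.

Lemma lincomb_mem P xs a x : P 0 -> P a -> x \in xs -> lincomb P xs (a *: x).
Proof.
move=> P0 Pa; elim: xs => [//|y ys IH] /=; rewrite in_cons => /orP [/eqP ->|x_ys].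
  by exists a, 0; split; rewrite ?addr0 //; apply: lincomb0.
by exists 0, (a *: x); split; rewrite ?scale0r ?add0r //; apply: IH.
Qed.

Lemma lincomb_ann P xs w v :
  (forall x, x \in xs -> w *: x = 0) -> lincomb P xs v -> w *: v = 0.
Proof.
elim: xs v => [|x ys IH] v /= wxs; first by move=> ->; rewrite scaler0.
move=> [a [v' [_ Hv ->]]].
rewrite scalerDr scalerA mulrC -scalerA wxs ?mem_head // scaler0 add0r.
by apply: IH => // z z_ys; apply: wxs; rewrite in_cons z_ys orbT.
Qed.

(* The multiplier v absorbs, one generator at a time, the coefficient of that
   generator in its own expression. *)
Lemma lincomb_nakayama_gen (J : R -> Prop) xs v : is_ideal J -> J (1 - v) ->
  (forall x, x \in xs -> lincomb J xs (v *: x)) ->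
  exists w, J (1 - w) /\ forall x, x \in xs -> w *: x = 0.
Proof.
move=> HJ; case: (HJ) => J0 JD JM.
elim: xs v => [|y zs IH] v Jv vxs; first by exists v.
have [c [r0 [Jc r0_zs vy]]] := vxs y (mem_head _ _).
pose v' := v - c.
have Jv' : J (1 - v') by rewrite /v' opprB addrCA; apply: JD.
have v'y : v' *: y = r0 by rewrite /v' scalerBl vy addrAC subrr add0r.
clearbody v'.
have Jv'v : J (1 - v' * v).
  have -> : 1 - v' * v = (1 - v') + v' * (1 - v) by rewrite mulrBr mulr1 addrA subrK.
  by apply: JD => //; apply: JM.
have v'vzs z : z \in zs -> lincomb J zs ((v' * v) *: z).
  move=> z_zs; have /vxs [d [rz [Jd rz_zs vz]]] : z \in y :: zs.
    by rewrite in_cons z_zs orbT.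
  rewrite -scalerA vz scalerDr scalerA mulrC -scalerA v'y.
  apply: lincombD; first exact: JD.
    by apply: lincomb_scale r0_zs; apply: JM.
  by apply: lincomb_scale rz_zs; apply: JM.
have [w' [Jw' w'zs]] := IH _ Jv'v v'vzs.
exists (w' * v'); split.
  have -> : 1 - w' * v' = (1 - w') + w' * (1 - v') by rewrite mulrBr mulr1 addrA subrK.
  by apply: JD => //; apply: JM.
move=> z; rewrite in_cons => /orP [/eqP ->|z_zs].
  by rewrite -scalerA v'y; apply: lincomb_ann w'zs r0_zs.
by rewrite mulrC -scalerA w'zs // scaler0.
Qed.

Lemma lincomb_nakayama (J : R -> Prop) xs : is_ideal J ->
  (forall x, x \in xs -> lincomb J xs x) ->
  exists w, J (1 - w) /\ forall x, x \in xs -> w *: x = 0.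
Proof.
move=> HJ xsJ; apply: (lincomb_nakayama_gen (v := 1) HJ); first by rewrite subrr; case: HJ.
by move=> x /xsJ; rewrite scale1r.
Qed.

End LinearCombinations.

Section GVIdeals.
Variable R : comPzRingType.
Implicit Types (xs : seq R) (M A : lmodType R).

Lemma ideal_genE xs : ideal_gen xs = @lincomb R R^o (fun _ => True) xs.
Proof.
apply: funext => r; apply: propext; elim: xs r => [|x ys IH] r.
  split; first by case=> cs [_ ->]; rewrite big_ord0.
  by move=> /= ->; exists [::]; rewrite big_ord0.
split.
  case=> cs [size_cs ->]; case: cs size_cs => [//|c cs] /= [size_cs].
  exists c, (\sum_(i < size ys) cs`_i * ys`_i); split => //; last by rewrite big_ord_recl.
  by apply/IH; exists cs.
move=> /= [a [r' [_ /IH [cs [size_cs ->]] ->]]].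
by exists (a :: cs); split; [rewrite /= size_cs | rewrite big_ord_recl].
Qed.

Lemma lincomb_ideal (P : R -> Prop) xs : is_ideal P -> is_ideal (@lincomb R R^o P xs).
Proof.
case=> P0 PD PM; split; first exact: lincomb0.
  by move=> x y; apply: lincombD.
by move=> a x; apply: lincomb_scale => b; apply: PM.
Qed.

Lemma ideal_gen_ideal xs : is_ideal (ideal_gen xs).
Proof. by rewrite ideal_genE; apply: lincomb_ideal. Qed.

Lemma ideal_gen_mem xs x : x \in xs -> ideal_gen xs x.
Proof. by move=> x_xs; rewrite ideal_genE -[x]mul1r; apply: lincomb_mem. Qed.

Lemma quotient_by_fin_presented xs M : quotient_by (ideal_gen xs) M -> fin_presented M.
Proof.
case=> q0 [q0_gen q0_ann]; exists 1%N, (fun _ => q0); split.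
  by move=> y; have [r ->] := q0_gen y; exists (fun _ => r); rewrite big_ord1.
exists (size xs), (fun l _ => xs`_l); split.
  by move=> l; rewrite big_ord1; apply/q0_ann/ideal_gen_mem/mem_nth.
move=> c; rewrite big_ord1 => /q0_ann [cs [size_cs c0]].
by exists (fun l => cs`_l) => i; rewrite (ord1 i) c0.
Qed.

Lemma GV_ann0 xs w : GV xs -> (forall x, x \in xs -> w * x = 0) -> w = 0.
Proof.
move=> [GV_ann _] wxs; apply: GV_ann => x; rewrite ideal_genE.
exact: (@lincomb_ann _ R^o _ xs w x wxs).
Qed.

Definition GV_trivial := forall xs, GV xs -> ideal_gen xs 1.

Lemma abs_w_pure_GV_ann xs A :
  GV xs -> (forall j (a : A), ideal_gen xs j -> j *: a = 0) -> abs_w_pure A.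
Proof.
move=> GVxs Aann N _ E i p _; exists xs; split => // j Jj.
by exists (fun _ => 0); split; [exact: lin_cst0 | move=> a; rewrite Aann].
Qed.

Lemma GV_trivial_abs_pure A : GV_trivial -> abs_w_pure A -> abs_pure A.
Proof.
move=> GVR A_absw N N_fp E i p ses_ip.
have [xs [GVxs Hj]] := A_absw N N_fp E i p ses_ip.
have [h [h_lin hi]] := Hj 1 (GVR xs GVxs).
by apply: (ses_split ses_ip h_lin) => a; rewrite hi scale1r.
Qed.

Lemma GV_trivial_w_module M : GV_trivial -> w_module M.
Proof.
move=> GVR; split.
  by move=> x [xs [GVxs Hx]]; rewrite -[x]scale1r; apply/Hx/GVR.
move=> xs GVxs Q [q0 [q0_gen q0_ann]] E i p [_ p_lin _ _ _].
have q0_0 : q0 = 0 by rewrite -[q0]scale1r; apply/q0_ann/GVR.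
exists (fun _ => 0); split; first exact: lin_cst0.
by move=> y; have [r ->] := q0_gen y; rewrite q0_0 scaler0 lin0.
Qed.

Lemma GV_trivial_DW : GV_trivial -> DW_ring R.
Proof. by move=> GVR I _ N *; apply: GV_trivial_w_module. Qed.

Lemma DW_GV_trivial : DW_ring R -> GV_trivial.
Proof.
move=> DW xs GVxs; have J_ideal := ideal_gen_ideal xs.
pose p := quot_pi (ideal_submod J_ideal).
have p_lin : lin p := quot_pi_lin _.
have p_surj y : exists x, p x = y by have [x ->] := quot_pi_surj y; exists x.
have J_w : w_module (sub_mod (kermod p_lin)).
  apply: (DW _ J_ideal _ _ (@sval_lin _ _ (kermod p_lin)) (@sval_inj _ _ _)).
  move=> r; split => [Jr | [[x px] <-]].
    by exists (exist _ r ((quot_pi_eq0 (ideal_submod J_ideal) r).2 Jr)).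
  exact: (quot_pi_eq0 (ideal_submod J_ideal) x).1 px.
have [s [s_lin ps]] :=
  J_w.2 xs GVxs _ (quot_ideal_quotient_by J_ideal) _ _ _ (ses_ker p_lin p_surj).
have s1 : s (p 1) = 0.
  by apply: GVxs.1 => x Jx; rewrite mulrC; exact: (lin_quot_ideal_ann s_lin Jx).
by have := ps (p 1); rewrite s1 lin0 // => /esym /quot_pi_eq0.
Qed.

End GVIdeals.

Section IdealSquare.
Variables (R : comPzRingType) (xs : seq R).

Local Notation J := (ideal_gen xs).
Local Notation J2 := (@lincomb R R^o (ideal_gen xs) xs).
Local Notation SJ := (ideal_submod (ideal_gen_ideal xs)).

Lemma ideal_sq_ideal : @is_ideal R J2.
Proof. exact/lincomb_ideal/ideal_gen_ideal. Qed.

Local Notation SJ2 := (ideal_submod ideal_sq_ideal).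
Local Notation p := (quot_lift SJ : quot_mod SJ2 -> quot_mod SJ).

Lemma ideal_sq_sub r : J2 r -> J r.
Proof. by move=> J2r; rewrite ideal_genE; apply: lincomb_mono J2r. Qed.

Lemma ideal_mul_sq a b : J a -> J b -> J2 (a * b).
Proof.
move=> Ja; rewrite {1}ideal_genE => Jb.
apply: (@lincomb_scale _ R^o (fun _ => True) _ xs a b) Jb => c _.
by rewrite mulrC; case: (ideal_gen_ideal xs) => _ _; apply.
Qed.

Lemma ideal_sq_lift_lin : lin p.
Proof. by apply: quot_lift_lin; apply: ideal_sq_sub. Qed.

Lemma ideal_sq_lift_surj y : exists x, p x = y.
Proof.
have [x ->] := quot_pi_surj y; exists (quot_pi SJ2 x).
by apply: quot_liftE; apply: ideal_sq_sub.
Qed.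

Lemma ker_ideal_sq_ann j (a : sub_mod (kermod ideal_sq_lift_lin)) : J j -> j *: a = 0.
Proof.
move=> Jj; apply: sval_inj; case: a => e /=; have [x ->] := quot_pi_surj e.
rewrite quot_liftE; last exact: ideal_sq_sub.
move=> /quot_pi_eq0 Jx; rewrite -linZ; last exact: quot_pi_lin.
exact/quot_pi_eq0/ideal_mul_sq.
Qed.

Lemma ideal_sq_split_idem (s : quot_mod SJ -> quot_mod SJ2) :
  lin s -> (forall y, p (s y) = y) -> forall x, x \in xs -> J2 x.
Proof.
move=> s_lin ps x x_xs; have Jx := ideal_gen_mem x_xs.
have [r s1] := quot_pi_surj (s (quot_pi SJ 1)).
have Jr1 : J (r - 1).
  by have := ps (quot_pi SJ 1); rewrite s1 quot_liftE; [move/quot_piP | exact: ideal_sq_sub].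
have J2xr : J2 (x * r).
  apply/(quot_pi_eq0 SJ2); rewrite -[x * r]/(x *: r) linZ; last exact: quot_pi_lin.
  by rewrite -s1; apply: lin_quot_ideal_ann.
have -> : x = x * r - x * (r - 1) by rewrite mulrBr mulr1 opprB addrC subrK.
exact: idealB ideal_sq_ideal J2xr (ideal_mul_sq Jx Jr1).
Qed.

Lemma quot_GV_w_FP_projective_unit :
  GV xs -> w_FP_projective (quot_mod SJ) -> J 1.
Proof.
move=> GVxs R_J_wfp.
have ker_absw := abs_w_pure_GV_ann GVxs ker_ideal_sq_ann.
have [s [s_lin ps]] :=
  R_J_wfp _ ker_absw _ _ _ (ses_ker ideal_sq_lift_lin ideal_sq_lift_surj).
have [w [Jw wxs]] :=
  @lincomb_nakayama _ R^o _ xs (ideal_gen_ideal xs) (ideal_sq_split_idem s_lin ps).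
by rewrite (GV_ann0 GVxs wxs) subr0 in Jw.
Qed.

End IdealSquare.

Lemma fin_presented_FP_projective (R : comPzRingType) (N : lmodType R) :
  fin_presented N -> FP_projective N.
Proof. by move=> N_fp A A_abs; apply: A_abs. Qed.

Lemma fin_presented_w_FP_projective_GV_trivial (R : comPzRingType) :
  (forall N : lmodType R, fin_presented N -> w_FP_projective N) -> GV_trivial R.
Proof.
move=> fp_wfp xs GVxs; apply: quot_GV_w_FP_projective_unit GVxs _.
exact/fp_wfp/quotient_by_fin_presented/quot_ideal_quotient_by.
Qed.

Theorem proposition2p4 (R : comPzRingType) :
  ((forall N : lmodType R, fin_presented N -> w_FP_projective N) <-> DW_ring R) /\
  ((forall M : lmodType R, FP_projective M -> w_FP_projective M) <-> DW_ring R).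
Proof.
have DW_abs_pure (A : lmodType R) : DW_ring R -> abs_w_pure A -> abs_pure A.
  by move=> /DW_GV_trivial; apply: GV_trivial_abs_pure.
split; split.
- by move/fin_presented_w_FP_projective_GV_trivial/GV_trivial_DW.
- by move=> DW N N_fp A /(DW_abs_pure _ DW); apply.
- move=> FPP_wfp; apply/GV_trivial_DW/fin_presented_w_FP_projective_GV_trivial.
  by move=> N /fin_presented_FP_projective; apply: FPP_wfp.
- by move=> DW M M_FPP A /(DW_abs_pure _ DW); apply: M_FPP.
Qed.
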